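(* Let $A$ be an algebra over $B$ and let $e\in B$ be an idempotent. Then a $B$-linear $n$-bracket $\{\!\{-,\ldots,-\}\!\}$ on $A$ induces a unique $eBe$-linear $n$-bracket on $eAe$, namely $\{\!\{ea_1e,\ldots,ea_ne\}\!\}=(e\otimes\cdots\otimes e)\{\!\{a_1,\ldots,a_n\}\!\}(e\otimes\cdots\otimes e)$. If moreover $B=BeB$ and $\{\!\{-,\ldots,-\}\!\}$ is differential for $Q\in(D_BA)_n$, then the induced $eBe$-linear $n$-bracket is differential for $\operatorname{Tr}(Q)\in(D_{eBe}eAe)_n$.
   Context: $\Bbbk$ field of characteristic $0$, $\otimes=\otimes_\Bbbk$; $A$ an associative unital $\Bbbk$-algebra containing a subalgebra $B$. Outer bimodule structure on $A^{\otimes n}$: $b(a_1\otimes\cdots\otimes a_n)c=ba_1\otimes\cdots\otimes a_nc$; $\tau_\sigma(a_1\otimes\cdots\otimes a_n)=a_{\sigma^{-1}(1)}\otimes\cdots\otimes a_{\sigma^{-1}(n)}$. A $B$-linear $n$-bracket is a $\Bbbk$-multilinear map $A^{\times n}\to A^{\otimes n}$ vanishing when an argument lies in $B$, a derivation in its last argument for the outer structure, with $\tau_{(1\ldots n)}\circ\{\!\{-,\ldots,-\}\!\}\circ\tau_{(1\ldots n)}^{-1}=(-1)^{n+1}\{\!\{-,\ldots,-\}\!\}$. $D_{A/B}=\operatorname{Der}_B(A,A\otimes A)$ (outer structure) with $A$-bimodule structure $(b\delta c)(a)=\delta(a)'c\otimes b\delta(a)''$; $D_BA=T_AD_{A/B}$.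 For $Q=\delta_1\cdots\delta_n$, $\{\!\{-,\ldots,-\}\!\}_Q=\sum_{i=0}^{n-1}(-1)^{(n-1)i}\tau^i_{(1\ldots n)}\circ\widetilde{\{\!\{\}\!\}}_Q\circ\tau^{-i}_{(1\ldots n)}$, $\widetilde{\{\!\{a_1,\ldots,a_n\}\!\}}_Q=\delta_n(a_n)'\delta_1(a_1)''\otimes\delta_1(a_1)'\delta_2(a_2)''\otimes\cdots\otimes\delta_{n-1}(a_{n-1})'\delta_n(a_n)''$; a bracket is differential for $Q$ if it equals $\{\!\{\}\!\}_Q$ (linear extension). When $B=BeB$, choose a decomposition $1=\sum_ip_ieq_i$ ($p_i,q_i\in B$); then $e(D_BA)e$ is identified with $D_{eBe}eAe$ (on degree one, $e\delta e$ acts by $eae\mapsto e\delta(a)'e\otimes e\delta(a)''e$), and $\operatorname{Tr}(Q)=\sum_ieq_iQp_ie$ viewed in $D_{eBe}eAe$. *)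

From Stdlib Require List.
From HB Require Import structures.
From mathcomp Require Import all_boot all_order all_algebra.

Set Implicit Arguments.
Unset Strict Implicit.
Unset Printing Implicit Defensive.

Import GRing.Theory.
Local Open Scope ring_scope.

(* Conventions.
   - [k] is the ground field, [A] a [k]-algebra ([algType k]).
   - Subalgebras and other subsets of [A] are Prop-valued predicates [A -> Prop].
   - An element of the tensor power (S)^{(x)n} (over k) of a k-subspace S of A
     is represented by a formal k-linear combination of pure tensors,
     i.e. a list of pairs (coefficient, n-tuple of elements of S);
     the tuple a : 'I_n -> A stands for a_0 (x) ... (x) a_{n-1}.
   - Two such formal combinations denote the same element of S^{(x)n}
     iff every k-multilinear form on S^n takes the same value on them
     ([teq_on S]); this is exactly equality in S^{(x)n}, since multilinear
     forms on S^n are the linear forms on S^{(x)n} and these separate points.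
   - Indices are 0-based: slot 0 is the "first" tensor factor, slot n.-1 the
     "last" one. *)

Section Tensors.
Variables (k : fieldType) (A : algType k).

Definition tensor (n : nat) := seq (k * ('I_n -> A)).

Definition upd n (a : 'I_n -> A) (i : 'I_n) (x : A) : 'I_n -> A :=
  fun j => if j == i then x else a j.

Definition updl n (a : 'I_n -> A) (x : A) : 'I_n -> A :=
  fun j => if val j == n.-1 then x else a j.

Definition all_in (S : A -> Prop) n (a : 'I_n -> A) : Prop := forall i, S (a i).

Definition multilinear_on (S : A -> Prop) n (phi : ('I_n -> A) -> k) : Prop :=
  forall (a : 'I_n -> A) (i : 'I_n) (c : k) (x y : A),
    all_in S a -> S x -> S y ->
    phi (upd a i (c *: x + y)) = c * phi (upd a i x) + phi (upd a i y).

Definition tev n (phi : ('I_n -> A) -> k) (x : tensor n) : k :=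
  \sum_(p <- x) p.1 * phi p.2.

Definition tensor_on (S : A -> Prop) n (x : tensor n) : Prop :=
  forall p, Stdlib.Lists.List.In p x -> all_in S p.2.

Definition teq_on (S : A -> Prop) n (x y : tensor n) : Prop :=
  forall phi, multilinear_on S phi -> tev phi x = tev phi y.

Definition tzero n : tensor n := [::].
Definition tadd n (x y : tensor n) : tensor n := x ++ y.
Definition tscale n (c : k) (x : tensor n) : tensor n :=
  [seq (c * p.1, p.2) | p <- x].
Definition tsum I n (s : seq I) (F : I -> tensor n) : tensor n :=
  flatten [seq F i | i <- s].

Definition tmap n m (f : ('I_n -> A) -> ('I_m -> A)) (x : tensor n) : tensor m :=
  [seq (p.1, f p.2) | p <- x].

Definition tlmul n (b : A) (x : tensor n) : tensor n :=
  tmap (fun a j => if val j == 0%N then b * a j else a j) x.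
Definition trmul n (x : tensor n) (c : A) : tensor n :=
  tmap (fun a j => if val j == n.-1 then a j * c else a j) x.

Definition tau_tup n (a : 'I_n -> A) : 'I_n -> A := fun j => a (ord_pred j).
Definition tauinv_tup n (a : 'I_n -> A) : 'I_n -> A := fun j => a (ordS j).
Definition tau_t n (x : tensor n) : tensor n := tmap (@tau_tup n) x.

Definition tsand n (e : A) (x : tensor n) : tensor n :=
  tmap (fun a j => e * a j * e) x.

(* [is_bracket S Bs n br] : br is a Bs-linear n-bracket on the algebra S
   (S a subalgebra-like subset of A, e.g. A itself or a corner eAe,
   with multiplication that of A), Bs the subalgebra of S. *)
Definition is_bracket (S Bs : A -> Prop) n
    (br : ('I_n -> A) -> tensor n) : Prop :=
  [/\
      (forall a, all_in S a -> tensor_on S (br a)),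
      (forall a i c x y, all_in S a -> S x -> S y ->
         teq_on S (br (upd a i (c *: x + y)))
                  (tadd (tscale c (br (upd a i x))) (br (upd a i y)))),
      (forall a i, all_in S a -> Bs (a i) -> teq_on S (br a) (tzero n)),
      (forall a x y, all_in S a -> S x -> S y ->
         teq_on S (br (updl a (x * y)))
                  (tadd (tlmul x (br (updl a y))) (trmul (br (updl a x)) y)))
    &
      (forall a, all_in S a ->
         teq_on S (tau_t (br (tauinv_tup a)))
                  (tscale ((-1) ^+ n.+1) (br a)))].

Definition dder := A -> tensor 2.

Definition fst2 : 'I_2 := ord0.
Definition snd2 : 'I_2 := ord_max.

Definition is_dder (S Bs : A -> Prop) (d : dder) : Prop :=
  [/\ (forall x, S x -> tensor_on S (d x)),
      (forall c x y, S x -> S y ->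
         teq_on S (d (c *: x + y)) (tadd (tscale c (d x)) (d y))),
      (forall x, Bs x -> teq_on S (d x) (tzero 2))
    & (forall x y, S x -> S y ->
         teq_on S (d (x * y)) (tadd (tlmul x (d y)) (trmul (d x) y)))].

(* A-bimodule structure on D_{A/B}: (b d c)(a) = d(a)' c (x) b d(a)'' *)
Definition dact (b : A) (d : dder) (c : A) : dder :=
  fun a => [seq (p.1, fun j : 'I_2 => if j == fst2 then p.2 fst2 * c
                                      else b * p.2 snd2) | p <- d a].

(* degree one of the identification e(D_B A)e = D_{eBe} eAe:
   e d e acts on eAe by  x |-> e d(x)' e (x) e d(x)'' e
   (here d is already of the form e d0 e, so we apply it to x and sandwich) *)
Definition dcorner (e : A) (d : dder) : dder := fun x => tsand e (d x).

(* all choices of one term in each of the lists L 0, ..., L (m-1):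
   the "expansion" of the product of the corresponding tensors *)
Fixpoint prodl (L : nat -> tensor 2) (m : nat) : seq (k * (nat -> 'I_2 -> A)) :=
  match m with
  | 0 => [:: (1, fun _ _ => 0)]
  | m'.+1 => [seq (p.1 * q.1, fun i => if i == m' then q.2 else p.2 i)
               | p <- prodl L m', q <- L m']
  end.

(* ~{{a_1,...,a_n}}_Q for Q = d_1 ... d_n, with Sweedler notation:
   d_n(a_n)' d_1(a_1)'' (x) d_1(a_1)' d_2(a_2)'' (x) ... (x)
   d_{n-1}(a_{n-1})' d_n(a_n)''  ; 0-based: slot j carries
   d_{j-1}(a_{j-1})' d_j(a_j)'' (indices mod n). *)
Definition brtilde n (ds : 'I_n -> dder) (a : 'I_n -> A) : tensor n :=
  let L := fun i : nat => if insub i is Some j then ds j (a j) else [::] in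
  [seq (c.1, fun j : 'I_n => c.2 (val (ord_pred j)) fst2 * c.2 (val j) snd2)
  | c <- prodl L n].

Definition brQ1 n (ds : 'I_n -> dder) (a : 'I_n -> A) : tensor n :=
  tsum (iota 0 n) (fun i =>
    tscale ((-1) ^+ (n.-1 * i))
      (tmap (fun b => iter i (@tau_tup n) b)
            (brtilde ds (iter i (@tauinv_tup n) a)))).

(* An element Q of (D_B A)_n = D_{A/B} (x)_A ... (x)_A D_{A/B} is given by a
   representative: a finite list Qs of n-tuples (d_1,...,d_n), standing for
   Q = sum over the list of the products d_1 ... d_n.  {{ }}_Q is the
   linear extension. *)
Definition brQ n (Qs : seq ('I_n -> dder)) (a : 'I_n -> A) : tensor n :=
  tsum Qs (fun ds => brQ1 ds a).

Definition is_differential (S : A -> Prop) n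
    (br : ('I_n -> A) -> tensor n) (Qs : seq ('I_n -> dder)) : Prop :=
  forall a, all_in S a -> teq_on S (br a) (brQ Qs a).

Definition corner (e : A) : A -> Prop := fun x => e * x * e = x.
Definition cornerB (e : A) (B : A -> Prop) : A -> Prop :=
  fun x => exists2 b, B b & x = e * b * e.

Definition is_subalg (B : A -> Prop) : Prop :=
  [/\ B 1, (forall x y, B x -> B y -> B (x + y)),
      (forall (c : k) x, B x -> B (c *: x)) & (forall x y, B x -> B y -> B (x * y))].

Definition induced_by (e : A) n (br br' : ('I_n -> A) -> tensor n) : Prop :=
  forall a, teq_on (corner e) (br' (fun i => e * a i * e)) (tsand e (br a)).

(* Tr(Q) = sum_i e q_i Q p_i e, for a decomposition 1 = sum_i p_i e q_i
   (pq = list of the pairs (p_i, q_i)), viewed in (D_{eBe} eAe)_n: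
   for Q = d_1 ... d_n, inserting 1 = sum_j p_j e q_j (and e = e e) between
   consecutive factors, e q_i Q p_i e is the sum over j_1, ..., j_{n-1} of
   (e q_i d_1 p_{j_1} e)(e q_{j_1} d_2 p_{j_2} e) ... (e q_{j_{n-1}} d_n p_i e),
   a product of degree-one elements of e D_{A/B} e = D_{eBe/eAe}.
   Below, j : 'I_n -> 'I_m encodes (i = j 0, j_1, ..., j_{n-1}) and the
   factor in slot l is e q_{j l} d_l p_{j (l+1 mod n)} e. *)
Definition trace_rep (e : A) (pq : seq (A * A)) n (Qs : seq ('I_n -> dder))
  : seq ('I_n -> dder) :=
  let m := size pq in
  let p := fun i : 'I_m => (nth (0, 0) pq i).1 in
  let q := fun i : 'I_m => (nth (0, 0) pq i).2 in
  [seq (fun l : 'I_n =>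
          dcorner e (dact (e * q (j l)) (ds l) (p (j (ordS l)) * e)))
  | ds <- Qs, j : {ffun 'I_n -> 'I_m} <- enum {ffun 'I_n -> 'I_m}].

End Tensors.

From Stdlib Require List.
From Stdlib Require Import FunctionalExtensionality.
From HB Require Import structures.
From mathcomp Require Import all_boot all_order all_algebra.

(* Identities in tensor powers are tested against multilinear forms [phi]
   on the corner eAe, pulled back to A as [sand_form e phi].  Writing the
   last argument of a B-linear bracket as e(xe), the derivation rule and the
   vanishing at [e \in B] give {{.., exe}} = e{{.., x}}e for the outer
   structure; cyclic skew-symmetry moves any slot to the last one, so the
   sandwiched bracket only depends on the e a_i e, which yields the induced
   bracket.  For the trace, each summand of Tr(Q) puts a factor p_r e q_r in
   every tensor slot of ~{{}}_Q, and multilinearity in all slots at once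
   collapses the sum over the index choices via 1 = sum_r p_r e q_r. *)

Set Implicit Arguments.
Unset Strict Implicit.
Unset Printing Implicit Defensive.

Import GRing.Theory.
Local Open Scope ring_scope.

Section TensorEvaluation.
Variables (k : fieldType) (A : algType k) (n : nat) (phi : ('I_n -> A) -> k).

Lemma tev_nil : tev phi [::] = 0.
Proof. by rewrite /tev big_nil. Qed.

Lemma tev_cat (x y : tensor A n) : tev phi (x ++ y) = tev phi x + tev phi y.
Proof. by rewrite /tev big_cat. Qed.

Lemma tev_tscale c (x : tensor A n) : tev phi (tscale c x) = c * tev phi x.
Proof. by rewrite /tev big_map mulr_sumr; apply: eq_bigr => p _; rewrite mulrA. Qed.

Lemma tev_tsum I (s : seq I) (F : I -> tensor A n) :
  tev phi (tsum s F) = \sum_(i <- s) tev phi (F i).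
Proof.
elim: s => [|i s IHs]; first by rewrite big_nil tev_nil.
by rewrite big_cons -IHs /tsum /= tev_cat.
Qed.

Lemma tev_tmap m (f : ('I_m -> A) -> 'I_n -> A) (x : tensor A m) :
  tev phi (tmap f x) = tev (fun a => phi (f a)) x.
Proof. by rewrite /tev big_map. Qed.

End TensorEvaluation.

Section MultilinearForms.
Variables (k : fieldType) (A : algType k) (n : nat).

Lemma multilinear_on_map (S1 S2 : A -> Prop) (g : 'I_n -> A -> A)
    (phi : ('I_n -> A) -> k) :
  (forall j c x y, g j (c *: x + y) = c *: g j x + g j y) ->
  (forall j x, S1 x -> S2 (g j x)) ->
  multilinear_on S2 phi -> multilinear_on S1 (fun a => phi (fun j => g j (a j))).
Proof.
move=> g_lin gS phi_ml a i c x y Sa Sx Sy.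
have g_upd z : (fun j => g j (upd a i z j)) = upd (fun j => g j (a j)) i (g i z).
  by apply: functional_extensionality => j; rewrite /upd; case: eqP => [->|].
by rewrite !g_upd g_lin; apply: phi_ml => [j||]; apply: gS.
Qed.

Lemma tau_tup_upd (a : 'I_n -> A) i z :
  tau_tup (upd a i z) = upd (tau_tup a) (ordS i) z.
Proof.
apply: functional_extensionality => j; rewrite /tau_tup /upd.
by congr (if _ then _ else _); apply/eqP/eqP => [<-|->]; rewrite ?ord_predK ?ordSK.
Qed.

Lemma tauinv_tup_upd (a : 'I_n -> A) i z :
  tauinv_tup (upd a i z) = upd (tauinv_tup a) (ord_pred i) z.
Proof.
apply: functional_extensionality => j; rewrite /tauinv_tup /upd.
by congr (if _ then _ else _); apply/eqP/eqP => [<-|->]; rewrite ?ord_predK ?ordSK.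
Qed.

Variable S : A -> Prop.

Lemma multilinear_on_tau (phi : ('I_n -> A) -> k) :
  multilinear_on S phi -> multilinear_on S (fun a => phi (tau_tup a)).
Proof.
move=> phi_ml a i c x y Sa Sx Sy.
by rewrite !tau_tup_upd; apply: phi_ml => // j; apply: Sa.
Qed.

Lemma multilinear_on_iter_tau i (phi : ('I_n -> A) -> k) :
  multilinear_on S phi -> multilinear_on S (fun a => phi (iter i (@tau_tup _ _ n) a)).
Proof.
elim: i phi => [|i IHi] phi phi_ml // a j c x y Sa Sx Sy.
exact: (IHi _ (multilinear_on_tau phi_ml) a j c x y Sa Sx Sy).
Qed.

Hypothesis S0 : S 0.
Hypothesis SD : forall x y, S x -> S y -> S (x + y).

Lemma multilinear_on_upd0 (phi : ('I_n -> A) -> k) a i :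
  multilinear_on S phi -> all_in S a -> phi (upd a i 0) = 0.
Proof.
move=> phi_ml Sa; have := phi_ml a i (-1) 0 0 Sa S0 S0.
by rewrite scaler0 add0r mulN1r addNr.
Qed.

Lemma multilinear_on_upd_sum (phi : ('I_n -> A) -> k) a i I (s : seq I) (g : I -> A) :
  multilinear_on S phi -> all_in S a -> (forall j, S (g j)) ->
  phi (upd a i (\sum_(j <- s) g j)) = \sum_(j <- s) phi (upd a i (g j)).
Proof.
move=> phi_ml Sa Sg; elim: s => [|j s IHs].
  by rewrite !big_nil (multilinear_on_upd0 _ phi_ml).
have Ss : S (\sum_(j <- s) g j) by apply: big_ind.
by rewrite !big_cons -IHs -(scale1r (g j)) phi_ml // mul1r scale1r.
Qed.

Lemma multilinear_on_expand_pfamily m (phi : ('I_n -> A) -> k)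
    (f : 'I_n -> 'I_m.+1 -> A) (r : seq 'I_n) (x : 'I_n -> A) :
  multilinear_on S phi -> (forall j t, S (f j t)) -> uniq r -> all_in S x ->
  \sum_(J in pfamily ord0 r (fun=> predT)) phi (fun j => if j \in r then f j (J j) else x j)
  = phi (fun j => if j \in r then \sum_(t < m.+1) f j t else x j).
Proof.
move=> phi_ml Sf; elim: r x => [x _ | i r IHr x /andP[/negbTE ri Ur]] Sx.
  rewrite (big_pred1 [ffun=> ord0]) // => J.
  apply/familyP/eqP => /= [DJ | -> j]; last by rewrite ffunE !inE.
  by apply/ffunP => j; rewrite ffunE; apply/eqP/DJ.
pose y j := if j \in r then \sum_(t < m.+1) f j t else x j.
have Sy : all_in S y by move=> j; rewrite /y; case: ifP => _ //; apply: big_ind.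
have -> : (fun j => if j \in i :: r then \sum_(t < m.+1) f j t else x j)
          = upd y i (\sum_(t < m.+1) f i t).
  by apply: functional_extensionality => j; rewrite /upd /y inE; case: eqP => [->|].
rewrite (multilinear_on_upd_sum _ _ phi_ml Sy) //.
rewrite (partition_big (fun J : {ffun 'I_n -> 'I_m.+1} => J i) predT) //=.
apply: eq_bigr => t _.
pose seti t (J : {ffun 'I_n -> 'I_m.+1}) := [ffun j => if j == i then t else J j].
rewrite (reindex_onto (seti t) (seti ord0)) => [|J /andP[_ /eqP Ji]]; last first.
  by apply/ffunP => j; rewrite !ffunE; case: eqP => // ->.
have Sx' : all_in S (upd x i (f i t)) by move=> j; rewrite /upd; case: eqP.
have -> : upd y i (f i t) = (fun j => if j \in r then \sum_(t < m.+1) f j t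
                                      else upd x i (f i t) j).
  apply: functional_extensionality => j; rewrite /upd /y.
  by case: eqP => [->|]; rewrite ?ri.
rewrite -(IHr _ Ur Sx'); apply: eq_big => [J | J _]; last first.
  congr phi; apply: functional_extensionality => j; rewrite /upd !inE !ffunE.
  by case: eqP => [->|] //=; rewrite ri.
rewrite !ffunE !eqxx andbT; apply/andP/familyP => /= [[PJ J0] j | PJ].
  have /[!(ffunE, inE)] := familyP PJ j; case: eqP => // -> _.
  by rewrite ri -(eqP J0) !ffunE !inE !eqxx.
(split; [apply/familyP | apply/eqP/ffunP]) => j; have /[!(ffunE, inE)] := PJ j.
  by case: eqP => // ->.
by case: eqP => // ->; rewrite ri /= => /eqP.
Qed.

Lemma multilinear_on_expand m (phi : ('I_n -> A) -> k) (f : 'I_n -> 'I_m -> A) :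
  (0 < n)%N -> multilinear_on S phi -> (forall j t, S (f j t)) ->
  \sum_(J : {ffun 'I_n -> 'I_m}) phi (fun j => f j (J j))
  = phi (fun j => \sum_(t < m) f j t).
Proof.
move=> n_gt0 phi_ml; case: m f => [|m] f Sf.
  rewrite big1 => [|J _]; last by case: (J (Ordinal n_gt0)).
  have -> : (fun j => \sum_(t < 0) f j t) = upd (fun=> 0) (Ordinal n_gt0) 0.
    by apply: functional_extensionality => j; rewrite big_ord0 /upd; case: eqP.
  by rewrite (multilinear_on_upd0 _ phi_ml).
have enumT (g : 'I_n -> A) : (fun j => if j \in enum 'I_n then g j else 0) = g.
  by apply: functional_extensionality => j; rewrite mem_enum.
have := multilinear_on_expand_pfamily (x := fun=> 0) phi_ml Sf (enum_uniq 'I_n) (fun=> S0).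
rewrite (enumT (fun j => \sum_(t < m.+1) f j t)) => <-.
apply: eq_big => [J | J _]; last by rewrite enumT.
by apply/esym/familyP => j; rewrite /= mem_enum.
Qed.

Lemma multilinear_on_mull_first c (phi : ('I_n -> A) -> k) :
  multilinear_on (fun=> True) phi ->
  multilinear_on (fun=> True) (fun a => phi (fun j => if val j == 0%N then c * a j else a j)).
Proof.
apply: (multilinear_on_map (g := fun j x => if val j == 0%N then c * x else x)) => // j d x y.
by case: ifP => _ //; rewrite mulrDr -scalerAr.
Qed.

Lemma multilinear_on_mulr_last c (phi : ('I_n -> A) -> k) :
  multilinear_on (fun=> True) phi ->
  multilinear_on (fun=> True) (fun a => phi (fun j => if val j == n.-1 then a j * c else a j)).
Proof.
apply: (multilinear_on_map (g := fun j x => if val j == n.-1 then x * c else x)) => // j d x y.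
by case: ifP => _ //; rewrite mulrDl -scalerAl.
Qed.

End MultilinearForms.

Lemma prodl_map (k : fieldType) (A : algType k) (L L' : nat -> tensor A 2)
    (h : nat -> ('I_2 -> A) -> 'I_2 -> A) m :
  (forall i, L' i = [seq (p.1, h i p.2) | p <- L i]) ->
  prodl L' m = [seq (c.1, fun i => if (i < m)%N then h i (c.2 i) else c.2 i)
               | c <- prodl L m].
Proof.
move=> DL'; elim: m => [|m IHm] //=.
rewrite IHm DL' allpairs_mapl allpairs_mapr map_allpairs.
apply: eq_allpairs => c q /=; congr (_, _); apply: functional_extensionality => i.
case: (ltngtP i m) => [lt_im|lt_mi|->]; last by rewrite ltnSn.
  by rewrite ltnS (ltnW lt_im).
by rewrite ltnNge lt_mi.
Qed.

Section Corner.
Variables (k : fieldType) (A : algType k) (e : A).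
Hypothesis e_idem : e * e = e.

Definition sand_form n (phi : ('I_n -> A) -> k) (a : 'I_n -> A) : k :=
  phi (fun j => e * a j * e).

Lemma tev_tsand n (phi : ('I_n -> A) -> k) (x : tensor A n) :
  tev phi (tsand e x) = tev (sand_form phi) x.
Proof. exact: tev_tmap. Qed.

Lemma mulr_ee (u : A) : u * e * e = u * e.
Proof. by rewrite -mulrA e_idem. Qed.

Lemma corner_sand x : corner e (e * x * e).
Proof. by rewrite /corner !mulrA e_idem mulr_ee. Qed.

Lemma corner0 : corner e 0.
Proof. by rewrite /corner mulr0 mul0r. Qed.

Lemma cornerD x y : corner e x -> corner e y -> corner e (x + y).
Proof. by rewrite /corner => ex ey; rewrite mulrDr mulrDl ex ey. Qed.

Lemma all_in_corner_sand n (a : 'I_n -> A) :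
  all_in (corner e) a -> (fun j => e * a j * e) = a.
Proof. by move=> ea; apply: functional_extensionality => j; apply: ea. Qed.

Lemma multilinear_on_sand_form n (phi : ('I_n -> A) -> k) :
  multilinear_on (corner e) phi -> multilinear_on (fun=> True) (sand_form phi).
Proof.
apply: (multilinear_on_map (g := fun _ x => e * x * e)) => [_ c x y|_ x _].
  by rewrite mulrDr mulrDl -scalerAr -scalerAl.
exact: corner_sand.
Qed.

Lemma iter_tau_tup_sand n i (a : 'I_n -> A) :
  iter i (@tau_tup _ _ n) (fun j => e * a j * e)
  = fun j => e * iter i (@tau_tup _ _ n) a j * e.
Proof. by elim: i => [|i IHi] //=; rewrite IHi. Qed.

Variables (n : nat) (pq : seq (A * A)).
Hypothesis n_gt0 : (0 < n)%N.
Hypothesis pq_sum : \sum_(x <- pq) x.1 * e * x.2 = 1.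

Let m := size pq.
Let p (r : 'I_m) := (nth (0, 0) pq r).1.
Let q (r : 'I_m) := (nth (0, 0) pq r).2.
Let trace_ds (ds : 'I_n -> dder A) (J : {ffun 'I_n -> 'I_m}) (l : 'I_n) :=
  dcorner e (dact (e * q (J l)) (ds l) (p (J (ordS l)) * e)).

Lemma brtilde_trace (phi : ('I_n -> A) -> k) (ds : 'I_n -> dder A) (a : 'I_n -> A) :
  multilinear_on (corner e) phi ->
  \sum_(J <- enum {ffun 'I_n -> 'I_m}) tev phi (brtilde (trace_ds ds J) a)
  = tev (sand_form phi) (brtilde ds a).
Proof.
move=> phi_ml.
pose L i := if insub i is Some j then ds j (a j) else [::].
have brtildeJ (J : {ffun 'I_n -> 'I_m}) :
  tev phi (brtilde (trace_ds ds J) a)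
  = \sum_(c <- prodl L n) c.1 * phi (fun j => e * c.2 (val (ord_pred j)) fst2
                                       * (p (J j) * e * q (J j)) * (c.2 (val j) snd2 * e)).
  rewrite /brtilde /tev big_map.
  rewrite (prodl_map (L := L) (h := fun i t => if insub i is Some l then
     (fun s : 'I_2 => e * (if s == fst2 then t fst2 * (p (J (ordS l)) * e)
                          else e * q (J l) * t snd2) * e) else t)); last first.
    move=> i; rewrite /L; case: insubP => [l _ _|_] //=.
    by rewrite /trace_ds /dcorner /tsand /tmap /dact -!map_comp.
  rewrite big_map; apply: eq_bigr => c _; congr (_ * phi _).
  apply: functional_extensionality => j; cbn [fst snd].
  by rewrite !ltn_ord !valK ord_predK eqxx /= !mulrA !mulr_ee.
rewrite big_enum /=; under eq_bigr do rewrite brtildeJ.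
rewrite exchange_big /tev big_map; apply: eq_bigr => c _.
pose f (j : 'I_n) (r : 'I_m) :=
  e * c.2 (val (ord_pred j)) fst2 * (p r * e * q r) * (c.2 (val j) snd2 * e).
have f_corner j r : corner e (f j r) by rewrite /corner /f !mulrA e_idem mulr_ee.
rewrite -mulr_sumr (multilinear_on_expand corner0 cornerD n_gt0 phi_ml f_corner).
congr (_ * phi _); apply: functional_extensionality => j.
have pq_sum_ord : \sum_(r < m) p r * e * q r = 1.
  by rewrite -pq_sum (big_nth (0, 0)) big_mkord.
by rewrite -mulr_suml -mulr_sumr pq_sum_ord mulr1 !mulrA.
Qed.

Lemma brQ_trace (phi : ('I_n -> A) -> k) (Qs : seq ('I_n -> dder A)) (a : 'I_n -> A) :
  multilinear_on (corner e) phi ->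
  tev phi (brQ (trace_rep e pq Qs) a) = tev (sand_form phi) (brQ Qs a).
Proof.
move=> phi_ml; rewrite /brQ !tev_tsum /trace_rep big_allpairs_dep.
apply: eq_bigr => ds _; rewrite /brQ1.
under eq_bigr do rewrite tev_tsum.
rewrite tev_tsum exchange_big; apply: eq_bigr => i _.
under eq_bigr do rewrite tev_tscale tev_tmap.
rewrite tev_tscale tev_tmap -mulr_sumr (brtilde_trace _ _ (multilinear_on_iter_tau i phi_ml)).
by congr (_ * _); apply: eq_bigr => c _; rewrite /sand_form iter_tau_tup_sand.
Qed.

Lemma is_differential_trace (Qs : seq ('I_n -> dder A)) (br br' : ('I_n -> A) -> tensor A n) :
  is_differential (fun=> True) br Qs -> induced_by e br br' ->
  is_differential (corner e) br' (trace_rep e pq Qs).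
Proof.
move=> br_diff br'_ind a ea phi phi_ml.
have psi_ml := multilinear_on_sand_form phi_ml.
rewrite -[in LHS](all_in_corner_sand ea) br'_ind // (tev_tsand phi).
by rewrite br_diff // brQ_trace.
Qed.

End Corner.

Section InducedBracket.
Variables (k : fieldType) (A : algType k) (B : A -> Prop) (e : A) (n : nat).
Hypothesis e_idem : e * e = e.
Hypothesis Be : B e.
Hypothesis n_gt0 : (0 < n)%N.
Variable br : ('I_n -> A) -> tensor A n.
Hypothesis br_bracket : is_bracket (fun=> True) B br.

Definition ord_last : 'I_n := Ordinal (etrans (ltn_predL n) n_gt0).

Lemma tev_br_updl_e (chi : ('I_n -> A) -> k) a :
  multilinear_on (fun=> True) chi -> tev chi (br (updl a e)) = 0.
Proof.
case: br_bracket => _ _ br_B _ _ chi_ml.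
have Be_last : B (updl a e ord_last) by rewrite /updl eqxx.
by rewrite (br_B _ _ (fun=> I) Be_last chi chi_ml) tev_nil.
Qed.

Lemma tev_br_updlM (chi : ('I_n -> A) -> k) a x y :
  multilinear_on (fun=> True) chi ->
  tev chi (br (updl a (x * y))) =
  tev chi (tlmul x (br (updl a y))) + tev chi (trmul (br (updl a x)) y).
Proof.
case: br_bracket => _ _ _ br_der _ chi_ml.
by rewrite (br_der a x y (fun=> I) I I chi chi_ml) tev_cat.
Qed.

Lemma tev_br_cycle (chi : ('I_n -> A) -> k) a :
  multilinear_on (fun=> True) chi ->
  tev chi (br a) = (-1) ^+ n.+1 * tev (fun b => chi (tau_tup b)) (br (tauinv_tup a)).
Proof.
case: br_bracket => _ _ _ _ br_cyc chi_ml.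
have := br_cyc a (fun=> I) chi chi_ml; rewrite tev_tscale /tau_t tev_tmap => ->.
by rewrite mulrA -exprMn mulrNN mulr1 expr1n mul1r.
Qed.

Lemma tev_br_sand_last (phi : ('I_n -> A) -> k) a x :
  multilinear_on (corner e) phi ->
  tev (sand_form e phi) (br (updl a (e * x * e))) = tev (sand_form e phi) (br (updl a x)).
Proof.
move=> /(multilinear_on_sand_form e_idem) psi_ml.
rewrite -mulrA tev_br_updlM // [in X in _ + X]tev_tmap tev_br_updl_e ?addr0;
  last exact: multilinear_on_mulr_last.
rewrite tev_tmap tev_br_updlM; last exact: multilinear_on_mull_first.
rewrite [in X in X + _]tev_tmap tev_br_updl_e ?add0r; last first.
  exact: (multilinear_on_mull_first x (multilinear_on_mull_first e psi_ml)).
rewrite !tev_tmap /tev; apply: eq_bigr => t _; congr (_ * phi _).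
apply: functional_extensionality => j /=.
by case: (val j == n.-1); case: (val j == 0%N); rewrite ?mulrA ?e_idem ?mulr_ee.
Qed.

Definition absorbs_e_at (i : 'I_n) : Prop :=
  forall phi, multilinear_on (corner e) phi -> forall a x,
    tev (sand_form e phi) (br (upd a i (e * x * e))) = tev (sand_form e phi) (br (upd a i x)).

Lemma absorbs_e_at_last : absorbs_e_at ord_last.
Proof. by move=> phi phi_ml a x; apply: tev_br_sand_last. Qed.

Lemma absorbs_e_at_pred i : absorbs_e_at (ord_pred i) -> absorbs_e_at i.
Proof.
move=> absorbs_pred phi phi_ml a x.
have psi_ml := multilinear_on_sand_form e_idem phi_ml.
rewrite (tev_br_cycle _ psi_ml) [RHS](tev_br_cycle _ psi_ml) !tauinv_tup_upd.
by congr (_ * _); apply: (absorbs_pred _ (multilinear_on_tau phi_ml)).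
Qed.

Lemma absorbs_e_everywhere i : absorbs_e_at i.
Proof.
case: i => t; elim: t => [|t IHt] t_lt; apply: absorbs_e_at_pred.
  suff -> : ord_pred (Ordinal t_lt) = ord_last by exact: absorbs_e_at_last.
  by apply: val_inj; rewrite /= add0n modn_small // ltn_predL.
suff -> : ord_pred (Ordinal t_lt) = Ordinal (ltnW t_lt) by exact: IHt.
by apply: val_inj; rewrite /= modnDr modn_small // ltnW.
Qed.

Lemma tev_br_sand (phi : ('I_n -> A) -> k) a :
  multilinear_on (corner e) phi ->
  tev (sand_form e phi) (br (fun j => e * a j * e)) = tev (sand_form e phi) (br a).
Proof.
move=> phi_ml.
pose sand_on (r : seq 'I_n) j := if j \in r then e * a j * e else a j.
have upd_id (b : 'I_n -> A) i : upd b i (b i) = b.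
  by apply: functional_extensionality => j; rewrite /upd; case: eqP => [->|].
suff sand_onE r : tev (sand_form e phi) (br (sand_on r)) = tev (sand_form e phi) (br a).
  rewrite -(sand_onE (enum 'I_n)); congr (tev _ (br _)).
  by apply: functional_extensionality => j; rewrite /sand_on mem_enum.
elim: r => [|i r IHr] //.
rewrite -IHr -(upd_id (sand_on r) i) -(absorbs_e_everywhere i phi_ml).
congr (tev _ (br _)); apply: functional_extensionality => j.
rewrite /upd /sand_on inE; case: eqP => [->|] //=.
by case: ifP => _ //; rewrite corner_sand.
Qed.

Lemma induced_by_tsand : induced_by e br (fun a => tsand e (br a)).
Proof. by move=> a phi phi_ml; rewrite !tev_tsand tev_br_sand. Qed.

Lemma is_bracket_tsand :
  (forall x y, B x -> B y -> B (x * y)) ->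
  is_bracket (corner e) (cornerB e B) (fun a => tsand e (br a)).
Proof.
move=> BM; case: br_bracket => _ br_lin br_B br_der br_cyc.
have sand_ml := multilinear_on_sand_form e_idem.
split.
- by move=> a _ t /List.in_map_iff[u [<- _]] j; apply: corner_sand.
- move=> a i c x y _ _ _ phi /sand_ml psi_ml.
  rewrite tev_tsand (br_lin a i c x y (fun=> I) I I _ psi_ml).
  by rewrite !tev_cat !tev_tscale !tev_tsand.
- move=> a i _ [b Bb Dai] phi /sand_ml psi_ml.
  have Bai : B (a i) by rewrite Dai; apply/BM/Be/BM.
  by rewrite tev_tsand (br_B a i (fun=> I) Bai _ psi_ml) !tev_nil.
- move=> a x y _ ex ey phi /sand_ml psi_ml.
  rewrite tev_tsand (br_der a x y (fun=> I) I I _ psi_ml) !tev_cat !tev_tmap.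
  congr (_ + _); rewrite /tev; apply: eq_bigr => t _; congr (_ * phi _);
    apply: functional_extensionality => j /=; case: ifP => _ //.
    by rewrite -[in LHS]ex -[in RHS]ex !mulrA ?e_idem ?mulr_ee.
  by rewrite -[in LHS]ey -[in RHS]ey !mulrA ?e_idem ?mulr_ee.
- move=> a _ phi /sand_ml psi_ml.
  by have := br_cyc a (fun=> I) _ psi_ml; rewrite /tau_t !tev_tmap !tev_tscale !tev_tmap.
Qed.

End InducedBracket.

Lemma induced_by_unique (k : fieldType) (A : algType k) (e : A) n
    (br br1 br2 : ('I_n -> A) -> tensor A n) :
  induced_by e br br1 -> induced_by e br br2 ->
  forall a, all_in (corner e) a -> teq_on (corner e) (br1 a) (br2 a).
Proof.
move=> br1_ind br2_ind a ea phi phi_ml.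
by rewrite -(all_in_corner_sand ea) br1_ind ?br2_ind.
Qed.

Unset Implicit Arguments.
Theorem proposition2p7 (k : fieldType) (A : algType k)
  (char0 : [pchar k] =i pred0)
  (B : A -> Prop) (HB : is_subalg B)
  (e : A) (HeB : B e) (He : e * e = e)
  (n : nat) (Hn : (0 < n)%N)
  (br : ('I_n -> A) -> tensor A n)
  (Hbr : is_bracket (fun _ => True) B br) :
  (* existence of the induced eBe-linear n-bracket on eAe *)
  (exists br' : ('I_n -> A) -> tensor A n,
      is_bracket (corner e) (cornerB e B) br' /\ induced_by e br br') /\
  (* uniqueness *)
  (forall br1 br2 : ('I_n -> A) -> tensor A n,
      is_bracket (corner e) (cornerB e B) br1 -> induced_by e br br1 ->
      is_bracket (corner e) (cornerB e B) br2 -> induced_by e br br2 ->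
      forall a, all_in (corner e) a -> teq_on (corner e) (br1 a) (br2 a)) /\
  (* differential case *)
  (forall (pq : seq (A * A)) (Qs : seq ('I_n -> dder A)),
      (forall x, x \in pq -> B x.1 /\ B x.2) ->
      \sum_(x <- pq) x.1 * e * x.2 = 1 ->
      (forall ds, Stdlib.Lists.List.In ds Qs -> forall i, is_dder (fun _ => True) B (ds i)) ->
      is_differential (fun _ => True) br Qs ->
      forall br' : ('I_n -> A) -> tensor A n,
        induced_by e br br' ->
        is_differential (corner e) br' (trace_rep e pq Qs)).
Proof.
have [_ _ _ BM] := HB.
split; [|split].
- exists (fun a => tsand e (br a)).
  exact: conj (is_bracket_tsand He HeB Hbr BM) (induced_by_tsand He HeB Hn Hbr).
- by move=> br1 br2 _ br1_ind _ br2_ind; apply: induced_by_unique br1_ind br2_ind.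
- (* Only 1 = sum_i p_i e q_i matters: the trace identity holds for arbitrary
     p_i, q_i and double derivations. *)
  move=> pq Qs _ pq_sum _ br_diff br' br'_ind.
  exact (is_differential_trace He Hn pq_sum br_diff br'_ind).
Qed.
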